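(* Let $\mathcal{M},\mathcal{N}\subset\mathbb{R}^n$ be two manifolds that are $\mathcal{C}^k$-smooth ($k\geq 2$) around a point $\bar{x}\in\mathcal{M}\cap\mathcal{N}$, such that $\mathcal{M}\cap\mathcal{N}$ is a $\mathcal{C}^k$-smooth manifold around $\bar{x}$ and $\mathrm{T}_{\mathcal{M}\cap\mathcal{N}}(\bar{x})=\mathrm{T}_{\mathcal{M}}(\bar{x})\cap\mathrm{T}_{\mathcal{N}}(\bar{x})$. Let the parameters satisfy $\alpha\in(0,1]$, $\alpha_1,\alpha_2\in(0,2]$ and either (B1) $\alpha_1,\alpha_2\in(0,2)$, or (B2) $\alpha\in(0,1)$ with $\alpha_1\neq 2$ or $\alpha_2\neq 2$. Define $S_{\mathrm{T}(\bar{x})}\coloneqq(1-\alpha)I+\alpha\,\Pi^{\alpha_2}_{\mathrm{T}_{\mathcal{M}}(\bar{x})}\Pi^{\alpha_1}_{\mathrm{T}_{\mathcal{N}}(\bar{x})}$. Then \[ \mathrm{T}_{\mathcal{M}\cap\mathcal{N}}(\bar{x})=\mathrm{T}_{\mathcal{M}}(\bar{x})\cap\mathrm{T}_{\mathcal{N}}(\bar{x})=\mathrm{fix}\, S_{\mathrm{T}(\bar{x})} \] and \[ \Pi_{\mathrm{fix}\, S_{\mathrm{T}(\bar{x})}}=S_{\mathrm{T}(\bar{x})}^\infty , \] where $S^\infty\coloneqq\lim_{k\to\infty}S^k$.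
   Context: For a closed nonempty set $C$, $\Pi_C$ is the (unique) projection and $\Pi_C^{\alpha}\coloneqq(1-\alpha)I+\alpha\Pi_C$ is the relaxed projection. For a manifold $\mathcal{M}$ given locally as $\{x: F(x)=0\}$ with $F$ of class $\mathcal{C}^k$ with surjective derivative, the tangent space is $\mathrm{T}_{\mathcal{M}}(x)=\ker \mathrm{J}F(x)$. $\mathrm{fix}\,S\coloneqq\{x\mid Sx=x\}$. *)

From HB Require Import structures.
From mathcomp Require Import all_boot all_order all_algebra.
From mathcomp Require Import all_classical all_reals all_analysis.
Import Order.TTheory GRing.Theory Num.Theory.
Import numFieldNormedType.Exports.
Local Open Scope classical_set_scope.
Local Open Scope ring_scope.
Set Implicit Arguments. Unset Strict Implicit.

Fixpoint iter_der (R : realType) (n m : nat) (f : 'rV[R]_n -> 'rV[R]_m)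
  (vs : seq 'rV[R]_n) : 'rV[R]_n -> 'rV[R]_m :=
  if vs is v :: vs' then fun x => 'D_v (iter_der f vs') x else f.

Definition class_C (R : realType) (n m k : nat) (U : set 'rV[R]_n)
  (f : 'rV[R]_n -> 'rV[R]_m) : Prop :=
  (forall vs : seq 'rV[R]_n, (size vs < k)%N ->
     forall v x, U x -> derivable (iter_der f vs) x v) /\
  (forall vs : seq 'rV[R]_n, (size vs <= k)%N ->
     forall x, U x -> {for x, continuous (iter_der f vs)}).

Definition jac (R : realType) (n m : nat) (F : 'rV[R]_n -> 'rV[R]_m)
  (x : 'rV[R]_n) : 'rV[R]_n -> 'rV[R]_m := fun v => 'D_v F x.

Definition local_description (R : realType) (n k m : nat) (M : set 'rV[R]_n)
  (xbar : 'rV[R]_n) (U : set 'rV[R]_n) (F : 'rV[R]_n -> 'rV[R]_m) : Prop :=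
  [/\ open U, U xbar, class_C k U F,
      (forall x, U x -> forall w : 'rV[R]_m, exists v, jac F x v = w) &
      M `&` U = [set x | U x /\ F x = 0]].

Definition manifold_tangent (R : realType) (n k : nat) (M : set 'rV[R]_n)
  (xbar : 'rV[R]_n) (T : set 'rV[R]_n) : Prop :=
  exists (m : nat) (U : set 'rV[R]_n) (F : 'rV[R]_n -> 'rV[R]_m),
    local_description k M xbar U F /\ T = [set v | jac F xbar v = 0].

Definition enorm2 (R : realType) (n : nat) (x : 'rV[R]_n) : R :=
  (x *m x^T) 0 0.

Definition is_proj (R : realType) (n : nat) (C : set 'rV[R]_n)
  (x y : 'rV[R]_n) : Prop :=
  C y /\ forall z, C z -> enorm2 (x - y) <= enorm2 (x - z).

Definition eproj (R : realType) (n : nat) (C : set 'rV[R]_n)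
  (x : 'rV[R]_n) : 'rV[R]_n := xget 0 [set y | is_proj C x y].

Definition rproj (R : realType) (n : nat) (al : R) (C : set 'rV[R]_n)
  (x : 'rV[R]_n) : 'rV[R]_n := (1 - al) *: x + al *: eproj C x.

Definition S_op (R : realType) (n : nat) (al a1 a2 : R) (TM TN : set 'rV[R]_n)
  (x : 'rV[R]_n) : 'rV[R]_n :=
  (1 - al) *: x + al *: rproj a2 TM (rproj a1 TN x).

Definition fix_pts (R : realType) (n : nat) (S : 'rV[R]_n -> 'rV[R]_n)
  : set 'rV[R]_n := [set x | S x = x].

(* Each tangent space is [ker JF(xbar)] for a surjective Jacobian, hence the
   fixed space of an orthogonal projection matrix, and S_T(xbar) acts as
   [x |-> x S] for a matrix [S] assembled from these projections.  Relaxed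
   projections with parameter in (0, 2), their products, and averages of
   nonexpansive maps with the identity all satisfy
   |x S|^2 + c |x - x S|^2 <= |x|^2 for some c > 0.  This forces
   fix S = T_M /\ T_N = T_(M /\ N).  If P projects orthogonally onto that
   space, then S P = P S = P, and on ker P the map 1 - S is injective, so the
   inequality makes S a strict contraction there; hence
   S^j x - x P = (x - x P) S^j tends to 0. *)

From HB Require Import structures.
From mathcomp Require Import all_boot all_order all_algebra.
From mathcomp Require Import all_classical all_reals all_analysis.
From mathcomp Require Import ring lra.
Import Order.TTheory GRing.Theory Num.Theory.
Import numFieldNormedType.Exports.
Local Open Scope classical_set_scope.
Local Open Scope ring_scope.
Set Implicit Arguments.
Unset Strict Implicit.
Unset Printing Implicit Defensive.

Section InnerProduct.
Variables (R : realType) (n : nat).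
Implicit Types (u v w : 'rV[R]_n) (a : R).

Definition dotv u v : R := (u *m v^T) 0 0.

Lemma enorm2E u : enorm2 u = dotv u u.
Proof. by []. Qed.

Lemma dotvC u v : dotv u v = dotv v u.
Proof. by rewrite /dotv -[in RHS](trmxK (v *m u^T)) trmx_mul trmxK [in RHS]mxE. Qed.

Lemma dotvDl u v w : dotv (u + v) w = dotv u w + dotv v w.
Proof. by rewrite /dotv mulmxDl mxE. Qed.

Lemma dotvZl a u w : dotv (a *: u) w = a * dotv u w.
Proof. by rewrite /dotv -scalemxAl mxE. Qed.

Lemma dotvBl u v w : dotv (u - v) w = dotv u w - dotv v w.
Proof. by rewrite dotvDl -scaleN1r dotvZl mulN1r. Qed.

Lemma dotvDr u v w : dotv w (u + v) = dotv w u + dotv w v.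
Proof. by rewrite dotvC dotvDl !(dotvC w). Qed.

Lemma dotvZr a u w : dotv w (a *: u) = a * dotv w u.
Proof. by rewrite dotvC dotvZl dotvC. Qed.

Lemma dotvBr u v w : dotv w (u - v) = dotv w u - dotv w v.
Proof. by rewrite dotvC dotvBl !(dotvC w). Qed.

Lemma dotv0r u : dotv u 0 = 0.
Proof. by rewrite /dotv trmx0 mulmx0 mxE. Qed.

Lemma dotv_sum u v : dotv u v = \sum_i u 0 i * v 0 i.
Proof. by rewrite /dotv mxE; apply: eq_bigr => i _; rewrite mxE. Qed.

Lemma enorm2_ge0 u : 0 <= enorm2 u.
Proof. by rewrite enorm2E dotv_sum sumr_ge0 // => i _; rewrite -expr2 sqr_ge0. Qed.

Lemma enorm2_eq0 u : enorm2 u = 0 -> u = 0.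
Proof.
rewrite enorm2E dotv_sum => /eqP; rewrite psumr_eq0 => [/allP u0|i _]; last first.
  by rewrite -expr2 sqr_ge0.
apply/rowP => j; rewrite mxE.
by have := u0 j (mem_index_enum j); rewrite mulf_eq0 orbb => /eqP.
Qed.

Lemma enorm2_gt0 u : u != 0 -> 0 < enorm2 u.
Proof. by move=> u0; rewrite lt_def enorm2_ge0 andbT; apply: contra_neq u0 => /enorm2_eq0. Qed.

Lemma enorm2D u v : enorm2 (u + v) = enorm2 u + 2 * dotv u v + enorm2 v.
Proof. by rewrite !enorm2E dotvDl !dotvDr (dotvC v u); ring. Qed.

Lemma enorm2B u v : enorm2 (u - v) = enorm2 u - 2 * dotv u v + enorm2 v.
Proof. by rewrite !enorm2E dotvBl !dotvBr (dotvC v u); ring. Qed.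

Lemma enorm2Z a u : enorm2 (a *: u) = a ^+ 2 * enorm2 u.
Proof. by rewrite !enorm2E dotvZl dotvZr mulrA expr2. Qed.

Lemma enorm2D_le u v : enorm2 (u + v) <= 2 * enorm2 u + 2 * enorm2 v.
Proof.
have := enorm2_ge0 (u - v); rewrite enorm2B enorm2D; lra.
Qed.

Lemma cauchy_schwarz u v : dotv u v ^+ 2 <= enorm2 u * enorm2 v.
Proof.
have [->|v0] := eqVneq v 0; first by rewrite dotv0r expr0n /= mulr_ge0 ?enorm2_ge0.
have v_gt0 := enorm2_gt0 v0.
(* expand [0 <= |u - t v|^2] at the minimising [t = <u, v> / |v|^2] *)
have := enorm2_ge0 (u - (dotv u v / enorm2 v) *: v).
rewrite enorm2B enorm2Z dotvZr => H; rewrite -subr_ge0.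
have -> : enorm2 u * enorm2 v - dotv u v ^+ 2 = enorm2 v *
    (enorm2 u - 2 * (dotv u v / enorm2 v * dotv u v) +
     (dotv u v / enorm2 v) ^+ 2 * enorm2 v) by field; exact: lt0r_neq0.
by rewrite mulr_ge0 // ltW.
Qed.

Lemma mx_norm_lt u e : 0 < e -> enorm2 u < e ^+ 2 -> `|u| < e.
Proof.
move=> e0 ue; rewrite /Num.Def.normr /= mx_normrE.
apply: bigmax_lt => // -[i j] _ /=; rewrite (ord1 i).
have : `|u 0 j| ^+ 2 <= enorm2 u.
  rewrite enorm2E dotv_sum (bigD1 j) //= real_normK ?num_real // -expr2 lerDl.
  by apply: sumr_ge0 => k _; rewrite -expr2 sqr_ge0.
by move/le_lt_trans/(_ ue); rewrite !expr2 => ?; have := normr_ge0 (u 0 j); nra.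
Qed.

End InnerProduct.

Section RectangularMatrices.
Variable R : realType.

Lemma dotv_mulmxl n m (A : 'M[R]_(n, m)) (u : 'rV[R]_n) (v : 'rV[R]_m) :
  dotv (u *m A) v = dotv u (v *m A^T).
Proof. by rewrite /dotv trmx_mul trmxK mulmxA. Qed.

Lemma enorm2_mulmx_le n m (A : 'M[R]_(n, m)) :
  exists2 K, 0 < K & forall v, enorm2 (v *m A) <= K * enorm2 v.
Proof.
exists (1 + \sum_j enorm2 (col j A)^T) => [|v].
  by rewrite ltr_pwDl // sumr_ge0 // => j _; apply: enorm2_ge0.
rewrite mulrDl mul1r ler_wpDl ?enorm2_ge0 // mulr_suml.
rewrite enorm2E dotv_sum; apply: ler_sum => j _.
have -> : (v *m A) 0 j = dotv v (col j A)^T.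
  by rewrite dotv_sum mxE; apply: eq_bigr => i _; rewrite !mxE.
by rewrite -expr2 mulrC cauchy_schwarz.
Qed.

End RectangularMatrices.

Section OrthogonalProjection.
Variables (R : realType) (n : nat).
Implicit Types (P Q : 'M[R]_n) (x y z : 'rV[R]_n).

Definition orthoproj_mx P := P^T = P /\ P *m P = P.

Definition fixmx P := [set x : 'rV[R]_n | x *m P = x].

Lemma dotv_orthoproj P x y : orthoproj_mx P -> dotv (x - x *m P) (y *m P) = 0.
Proof.
move=> [PT PP]; rewrite dotvC dotv_mulmxl PT mulmxBl -mulmxA PP subrr.
exact: dotv0r.
Qed.

Lemma enorm2_orthoproj_split P x z : orthoproj_mx P -> fixmx P z ->
  enorm2 (x - z) = enorm2 (x - x *m P) + enorm2 (x *m P - z).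
Proof.
move=> hP zP; have -> : x - z = (x - x *m P) + (x *m P - z) by rewrite addrA subrK.
by rewrite enorm2D -[in dotv _ (_ - z)]zP -mulmxBl dotv_orthoproj // mulr0 addr0.
Qed.

Lemma eproj_fixmx P x : orthoproj_mx P -> eproj (fixmx P) x = x *m P.
Proof.
move=> hP; have xPP : fixmx P (x *m P) by rewrite /fixmx /= -mulmxA hP.2.
have xP_proj : is_proj (fixmx P) x (x *m P).
  by split=> // z zP; rewrite (enorm2_orthoproj_split _ hP zP) lerDl enorm2_ge0.
apply: xget_unique => // y [yP /(_ _ xPP)].
rewrite (enorm2_orthoproj_split _ hP yP) gerDl => y_le0.
by apply/esym/subr0_eq/enorm2_eq0/le_anti; rewrite y_le0 enorm2_ge0.
Qed.

Lemma mulmx_fixmx_sub P T : P *m P = P -> fixmx P `<=` fixmx T -> P *m T = P.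
Proof.
move=> PP PT; apply/row_matrixP => i; rewrite row_mul; apply: PT.
by rewrite /fixmx /= -row_mul PP.
Qed.

Lemma orthoproj_fixmx_sub P Q : orthoproj_mx P -> orthoproj_mx Q ->
  fixmx P `<=` fixmx Q -> Q *m P = P.
Proof.
move=> [PT PP] [QT _] /(mulmx_fixmx_sub PP) PQ.
by have := congr1 trmx PQ; rewrite trmx_mul PT QT.
Qed.

End OrthogonalProjection.

Lemma unitmx_inj (R : realType) n (B : 'M[R]_n) :
  (forall u : 'rV[R]_n, u *m B = 0 -> u = 0) -> B \in unitmx.
Proof.
move=> B_inj; rewrite -row_free_unit -kermx_eq0; apply/eqP/row_matrixP => i.
by rewrite row0; apply: B_inj; rewrite -row_mul mulmx_ker row0.
Qed.

(* The projection onto [ker A] is [1 - A (A^T A)^-1 A^T]; surjectivity of [A]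
   makes [A^T A] invertible. *)
Lemma kermx_orthoproj (R : realType) n m (A : 'M[R]_(n, m)) :
  (forall w : 'rV[R]_m, exists v : 'rV[R]_n, v *m A = w) ->
  exists2 P : 'M[R]_n, orthoproj_mx P & [set v | v *m A = 0] = fixmx P.
Proof.
move=> A_surj.
have AtA_unit : A^T *m A \in unitmx.
  apply: unitmx_inj => u uAtA0.
  have uAt0 : u *m A^T = 0.
    apply: enorm2_eq0; rewrite enorm2E /dotv trmx_mul trmxK !mulmxA.
    by rewrite -(mulmxA u) uAtA0 mul0mx mxE.
  have [v vA] := A_surj u; rewrite -vA; apply: enorm2_eq0.
  by rewrite enorm2E dotv_mulmxl vA uAt0 dotv0r.
set G := invmx (A^T *m A).
have GT : G^T = G by rewrite /G trmx_inv trmx_mul trmxK.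
have Q_idem : (A *m G *m A^T) *m (A *m G *m A^T) = A *m G *m A^T.
  by rewrite -!mulmxA (mulmxA A^T) (mulmxA G) mulVmx // mul1mx.
exists (1%:M - A *m G *m A^T); first split.
- by rewrite linearB /= trmx1 !trmx_mul trmxK GT mulmxA.
- by rewrite mulmxBl mul1mx mulmxBr mulmx1 Q_idem subrr subr0.
rewrite predeqE => v; rewrite /fixmx /= mulmxBr mulmx1; split.
  by move=> vA0; rewrite !mulmxA vA0 !mul0mx subr0.
move=> /eqP; rewrite subr_eq addrC -subr_eq subrr eq_sym => /eqP/(congr1 (mulmx^~ A)).
by rewrite mul0mx -!mulmxA mulVmx // mulmx1.
Qed.

Section DirectionalDerivative.
Variable R : realType.

Lemma mulr_dnbhs0 (c : R) : c != 0 -> (fun h : R => h * c) @ 0^' `=>` 0^'.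
Proof.
move=> c0 A hA; rewrite /= /dnbhs /within /= in hA *.
change (\forall h \near nbhs (0 : R), h != 0 -> A (h * c)).
have : (fun h : R => h * c) @ (0 : R) --> 0 * c.
  exact: (@cvgMr_tmp R R (nbhs (0 : R)) _ (fun h => h) 0 c cvg_id).
rewrite mul0r => /(_ [set s | s != 0 -> A s] hA) hAc.
near=> h => h0.
suff: h * c != 0 -> A (h * c) by apply; rewrite mulf_neq0.
by near: h.
Unshelve. all: by end_near.
Qed.

Lemma derive_dirZ n m (F : 'rV[R]_n -> 'rV[R]_m) x v (c : R) :
  derivable F x v -> 'D_(c *: v) F x = c *: 'D_v F x.
Proof.
move=> dF; have [->|c0] := eqVneq c 0; first by rewrite !scale0r derive0.
apply: cvg_lim => //.
have -> : (fun h : R => h^-1 *: ((F \o shift x) (h *: (c *: v)) - F x)) =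
    (fun h : R => c *: ((fun s : R => s^-1 *: (F (s *: v + x) - F x)) (h * c))).
  apply/funext => h /=; rewrite scalerA scalerA invfM mulrA (mulrC c) mulrK //.
  by rewrite unitfE.
have := cvg_comp _ _ (mulr_dnbhs0 c0) dF; exact: cvgZl_tmp.
Qed.

Lemma mx_entry_le n m (A : 'M[R]_(n, m)) i j : `|A i j| <= `|A|.
Proof.
rewrite [in leRHS]/Num.Def.normr /= mx_normrE.
exact: (le_bigmax _ (fun ij : 'I_n * 'I_m => `|A ij.1 ij.2|) (i, j)).
Qed.

Lemma mx_norm_le n m (A : 'M[R]_(n, m)) (e : R) : 0 <= e ->
  (forall i j, `|A i j| <= e) -> `|A| <= e.
Proof.
move=> e0 Ae; rewrite /Num.Def.normr /= mx_normrE.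
by apply: bigmax_le => // -[i j] _; apply: Ae.
Qed.

Lemma derive1_line n m (F : 'rV[R]_n -> 'rV[R]_m) (p v : 'rV[R]_n) j (s : R) :
  derivable F (s *: v + p) v ->
  derivable (fun t : R => F (t *: v + p) 0 j) s 1 /\
  'D_1 (fun t : R => F (t *: v + p) 0 j) s = 'D_v F (s *: v + p) 0 j.
Proof.
move=> dF; set G := fun t : R => F (t *: v + p).
have E : (fun h : R => h^-1 *: ((G \o shift s) (h *: 1) - G s)) =
         (fun h : R => h^-1 *: ((F \o shift (s *: v + p)) (h *: v) - F (s *: v + p))).
  by apply/funext => h /=; rewrite /G /= [h *: 1]mulr1 scalerDl addrA.
have dG : derivable G s 1 by rewrite /derivable E.
have DG : 'D_1 G s = 'D_v F (s *: v + p) by rewrite /derive E.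
split; first by move/derivable_mxP : dG => /(_ 0 j).
by rewrite -DG (derive_mx dG) mxE.
Qed.

Lemma MVT_between0 (g : R -> R) (h : R) :
  (forall s, `|s| <= `|h| -> derivable g s 1) ->
  exists2 c, `|c| <= `|h| & g h - g 0 = 'D_1 g c * h.
Proof.
move=> dg; have [h_ge0|h_lt0] := leP 0 h.
- have [||c] := @MVT_segment R g (fun s => 'D_1 g s) 0 h h_ge0.
  + move=> s; rewrite in_itv /= => /andP[s0 sh]; apply/derivableP/dg.
    by rewrite !ger0_norm // ?ltW.
  + apply: derivable_within_continuous => s; rewrite in_itv /= => /andP[s0 sh].
    by apply: dg; rewrite !ger0_norm.
  rewrite in_itv /= => /andP[c0 ch] E; exists c; last by rewrite E subr0.
  by rewrite !ger0_norm.
- have [||c] := @MVT_segment R g (fun s => 'D_1 g s) h 0 (ltW h_lt0).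
  + move=> s; rewrite in_itv /= => /andP[s0 sh]; apply/derivableP/dg.
    by rewrite !ler0_norm ?lerN2 // ltW.
  + apply: derivable_within_continuous => s; rewrite in_itv /= => /andP[s0 sh].
    by apply: dg; rewrite !ler0_norm ?lerN2 // ltW.
  rewrite in_itv /= => /andP[c0 ch] E; exists c; last by rewrite -opprB E sub0r mulrN opprK.
  by rewrite !ler0_norm ?lerN2 // ltW.
Qed.

End DirectionalDerivative.

Section Jacobian.
Variables (R : realType) (n m : nat) (F : 'rV[R]_n -> 'rV[R]_m).

Lemma mean_value_quotient_le (p v : 'rV[R]_n) (d : 'rV[R]_m) (h e : R) : h != 0 ->
  (forall s, `|s| <= `|h| ->
     derivable F (s *: v + p) v /\ `|d - 'D_v F (s *: v + p)| <= e) ->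
  `|d - h^-1 *: (F (h *: v + p) - F p)| <= e.
Proof.
move=> h0 near_d; have e_ge0 : 0 <= e.
  by have [_] := near_d 0 ltac:(by rewrite normr0); apply: le_trans.
apply: mx_norm_le => // i j; rewrite (ord1 i).
set g := fun t : R => F (t *: v + p) 0 j.
have [c ch gE] : exists2 c, `|c| <= `|h| & g h - g 0 = 'D_1 g c * h.
  by apply: MVT_between0 => s /near_d[dFs _]; exact: (derive1_line j dFs).1.
have [dFc dc] := near_d c ch.
have qE : h^-1 * (F (h *: v + p) 0 j - F p 0 j) = 'D_v F (c *: v + p) 0 j.
  have g0 : g 0 = F p 0 j by rewrite /g scale0r add0r.
  by rewrite -(derive1_line j dFc).2 -/(g h) -g0 gE mulrCA mulVf ?mulr1.
apply: le_trans dc; apply: le_trans (mx_entry_le _ 0 j); by rewrite !mxE qE.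
Qed.

Variables (U : set 'rV[R]_n) (x : 'rV[R]_n).
Hypotheses (U_open : open U) (Ux : U x).
Hypothesis F_derivable : forall y, U y -> forall w, derivable F y w.

(* The increment along [u + v] splits into an increment along [u] from [x] and
   one along [v] from the moving base point [h u + x]; continuity of ['D_v F]
   at [x] controls the latter through the mean value theorem. *)
Lemma derive_dirD u v : {for x, continuous ('D_v F)} ->
  'D_(u + v) F x = 'D_u F x + 'D_v F x.
Proof.
move=> DvF_cont; apply: cvg_lim => //.
set a := fun h : R => h^-1 *: (F (h *: v + (h *: u + x)) - F (h *: u + x)).
set b := fun h : R => h^-1 *: (F (h *: u + x) - F x).
have -> : (fun h : R => h^-1 *: ((F \o shift x) (h *: (u + v)) - F x)) = a \+ b.
  apply/funext => h /=; rewrite /a /b -scalerDr addrA subrK.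
  by rewrite [h *: (u + v)]scalerDr [h *: u + h *: v]addrC -addrA.
rewrite addrC; apply: cvgD; last exact: F_derivable.
apply/cvgrPdist_le => e e_gt0.
have : \forall y \near x, U y /\ `|'D_v F x - 'D_v F y| <= e.
  near=> y; split; near: y; first exact: open_nbhs_nbhs.
  by move/cvgrPdist_le : DvF_cont; apply.
move=> /nbhs_normP[r /= r_gt0 near_x].
set K := `|u| + `|v| + 1.
have K_gt0 : 0 < K by rewrite /K ltr_wpDl ?addr_ge0.
near=> h.
have h0 : h != 0 by near: h; exact: nbhs_dnbhs_neq.
have hK : `|h| < r / K by near: h; apply: dnbhs0_lt; rewrite divr_gt0.
apply: (mean_value_quotient_le (p := h *: u + x)) => [//|s sh].
have [Uy Dy] : U (s *: v + (h *: u + x)) /\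
    `|'D_v F x - 'D_v F (s *: v + (h *: u + x))| <= e.
  apply: near_x; rewrite /ball_ /= addrA opprD addrCA subrr addr0 normrN.
  apply: le_lt_trans (ler_normD _ _) _; rewrite !normrZ.
  apply: (@le_lt_trans _ _ (`|h| * K)); last by rewrite -ltr_pdivlMr.
  rewrite /K mulrDr mulr1 mulrDr addrC ler_wpDr //.
  by rewrite lerD // ?ler_wpM2r // mulrC.
by split; [exact: F_derivable | exact: Dy].
Unshelve. all: by end_near.
Qed.

Lemma derive_dir_mulmx : (forall w, {for x, continuous ('D_w F)}) ->
  exists A : 'M[R]_(n, m), forall v, 'D_v F x = v *m A.
Proof.
move=> DF_cont; set J := fun w : 'rV[R]_n => 'D_w F x.
have J_add : {morph J : u v / u + v >-> u + v}.
  by move=> u v; rewrite /J derive_dirD.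
have J0 : J 0 = 0 by rewrite /J derive0.
exists (\matrix_(i, j) J (delta_mx 0 i) 0 j) => v.
rewrite -/(J v) {1}(row_sum_delta v) (big_morph J J_add J0).
apply/rowP => j; rewrite summxE mxE; apply: eq_bigr => i _.
by rewrite /J derive_dirZ ?mxE //; apply: F_derivable.
Qed.

End Jacobian.

Lemma manifold_tangent_orthoproj (R : realType) n k (M : set 'rV[R]_n) xbar T :
  (0 < k)%N -> manifold_tangent k M xbar T ->
  exists2 P : 'M[R]_n, orthoproj_mx P & T = fixmx P.
Proof.
move=> k_gt0 [m [U [F [[U_open Uxbar [F_der F_cont] F_surj _] ->]]]].
have dF y : U y -> forall w, derivable F y w.
  by move=> Uy w; apply: (F_der [::]).
have [A JA] := derive_dir_mulmx U_open Uxbar dF (fun w => F_cont [:: w] k_gt0 _ Uxbar).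
have [|P hP kerA] := @kermx_orthoproj _ _ _ A.
  by move=> w; have [v <-] := F_surj xbar Uxbar w; exists v; rewrite -JA.
by exists P => //; rewrite -kerA predeqE => v /=; rewrite -JA.
Qed.

Section Relaxation.
Variables (R : realType) (n : nat).
Implicit Types (a c : R) (P Q T : 'M[R]_n) (x y : 'rV[R]_n).

Definition relax_mx a Q : 'M[R]_n := (1 - a)%:M + a *: Q.

Lemma mulmx_relax a Q x : x *m relax_mx a Q = (1 - a) *: x + a *: (x *m Q).
Proof. by rewrite mulmxDr mul_mx_scalar scalemxAr. Qed.

Lemma relax_residual a Q x : x - x *m relax_mx a Q = a *: (x - x *m Q).
Proof. by rewrite mulmx_relax scalerBl scale1r scalerBr opprD opprB addrA [x + _]addrC subrK. Qed.

Lemma relax1 Q : relax_mx 1 Q = Q.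
Proof. by rewrite /relax_mx subrr scale1r raddf0 add0r. Qed.

Lemma relax_mulmx_fix a Q P : Q *m P = P -> relax_mx a Q *m P = P.
Proof.
by move=> QP; rewrite mulmxDl mul_scalar_mx -scalemxAl QP -scalerDl subrK scale1r.
Qed.

Lemma fixmx_relax a Q : a != 0 -> fixmx (relax_mx a Q) = fixmx Q.
Proof.
move=> a0; rewrite predeqE => x; rewrite /fixmx /=.
split=> [xT|xQ]; last by rewrite mulmx_relax xQ -scalerDl subrK scale1r.
move: (relax_residual a Q x); rewrite xT subrr => /esym/eqP.
by rewrite scaler_eq0 (negbTE a0) subr_eq0 => /eqP.
Qed.

Lemma enorm2_relax_orthoproj a P x : orthoproj_mx P ->
  enorm2 (x *m relax_mx a P) = enorm2 x - a * (2 - a) * enorm2 (x - x *m P).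
Proof.
move=> hP; have xE : x = x *m P + (x - x *m P) by rewrite addrC subrK.
have -> : x *m relax_mx a P = x *m P + (1 - a) *: (x - x *m P).
  rewrite mulmx_relax scalerBr addrCA; congr (_ + _).
  by rewrite scalerBl scale1r opprB addrC subrK.
have := dotv_orthoproj x x hP; rewrite dotvC.
move: (x *m P) (x - x *m P) xE => p y -> dpy.
by rewrite !enorm2D enorm2Z dotvZr dpy; ring.
Qed.

Definition nonexpansive_mx T := forall x, enorm2 (x *m T) <= enorm2 x.

Definition strongly_nonexpansive_mx c T :=
  forall x, enorm2 (x *m T) <= enorm2 x - c * enorm2 (x - x *m T).

Lemma nonexpansive_mulmx T1 T2 :
  nonexpansive_mx T1 -> nonexpansive_mx T2 -> nonexpansive_mx (T1 *m T2).
Proof. by move=> h1 h2 x; rewrite mulmxA (le_trans (h2 _)). Qed.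

Lemma relax_orthoproj_nonexpansive a P :
  orthoproj_mx P -> 0 <= a <= 2 -> nonexpansive_mx (relax_mx a P).
Proof.
move=> hP /andP[a0 a2] x; rewrite enorm2_relax_orthoproj // gerBl.
by rewrite !mulr_ge0 ?subr_ge0 ?enorm2_ge0.
Qed.

Lemma relax_orthoproj_strongly_nonexpansive a P : orthoproj_mx P -> 0 < a < 2 ->
  strongly_nonexpansive_mx ((2 - a) / a) (relax_mx a P).
Proof.
move=> hP /andP[a0 _] x; rewrite enorm2_relax_orthoproj // relax_residual enorm2Z.
suff -> : (2 - a) / a * (a ^+ 2 * enorm2 (x - x *m P)) =
          a * (2 - a) * enorm2 (x - x *m P) by [].
by field; exact: lt0r_neq0.
Qed.

Lemma relax_nonexpansive a T : nonexpansive_mx T -> 0 < a <= 1 ->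
  strongly_nonexpansive_mx ((1 - a) / a) (relax_mx a T).
Proof.
move=> hT /andP[a0 a1] x; set d := x - x *m T.
have xT : x *m T = x - d by rewrite opprB addrC subrK.
have xS : x *m relax_mx a T = x - a *: d by rewrite -relax_residual opprB addrC subrK.
move: (hT x); rewrite relax_residual -/d xS xT; clearbody d.
rewrite !enorm2B enorm2Z dotvZr => hd.
have -> : (1 - a) / a * (a ^+ 2 * enorm2 d) = (1 - a) * a * enorm2 d.
  by field; exact: lt0r_neq0.
have := enorm2_ge0 d; nra.
Qed.

(* The residual of [T1 T2] at [x] is the sum of the residuals of [T1] at [x]
   and of [T2] at [x T1], and each of those is paid for by a loss of norm. *)
Lemma strongly_nonexpansive_mulmx c1 c2 T1 T2 : 0 <= c1 -> 0 <= c2 ->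
  strongly_nonexpansive_mx c1 T1 -> strongly_nonexpansive_mx c2 T2 ->
  strongly_nonexpansive_mx (Num.min c1 c2 / 4) (T1 *m T2).
Proof.
move=> c1_ge0 c2_ge0 h1 h2 x; set y := x *m T1.
have -> : x - x *m (T1 *m T2) = (x - y) + (y - y *m T2) by rewrite mulmxA addrA subrK.
have := enorm2D_le (x - y) (y - y *m T2); have := h1 x; have := h2 y.
rewrite mulmxA -/y; have := enorm2_ge0 (x - y); have := enorm2_ge0 (y - y *m T2).
have : Num.min c1 c2 <= c1 by rewrite ge_min lexx.
have : Num.min c1 c2 <= c2 by rewrite ge_min lexx orbT.
have : 0 <= Num.min c1 c2 by rewrite le_min c1_ge0 c2_ge0.
move: (Num.min c1 c2) => m; nra.
Qed.

Lemma strongly_nonexpansive_fix c T x : 0 < c -> strongly_nonexpansive_mx c T ->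
  enorm2 x <= enorm2 (x *m T) -> fixmx T x.
Proof.
move=> c0 hT /le_trans/(_ (hT x)) hx.
have : c * enorm2 (x - x *m T) <= 0 by lra.
rewrite pmulr_rle0 // => {}hx.
by apply/esym/subr0_eq/enorm2_eq0/le_anti; rewrite hx enorm2_ge0.
Qed.

Lemma fixmx_mulmx T1 T2 : nonexpansive_mx T1 -> nonexpansive_mx T2 ->
  (exists2 c, 0 < c & strongly_nonexpansive_mx c T1 \/ strongly_nonexpansive_mx c T2) ->
  fixmx (T1 *m T2) = fixmx T1 `&` fixmx T2.
Proof.
move=> h1 h2 [c c0 hT]; rewrite predeqE => x; split; last first.
  by move=> [x1 x2]; rewrite /fixmx /= mulmxA x1 x2.
rewrite /fixmx /= mulmxA => xT.
suff x1 : x *m T1 = x by split=> //; rewrite -{1}x1.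
case: hT => hT.
  by apply: strongly_nonexpansive_fix c0 hT _; rewrite -{1}xT h2.
have yT : (x *m T1) *m T2 = x *m T1.
  by apply: strongly_nonexpansive_fix c0 hT _; rewrite xT h1.
by rewrite -yT.
Qed.

End Relaxation.

Section RelaxedAlternatingProjections.
Variables (R : realType) (n : nat) (al a1 a2 : R) (P1 P2 : 'M[R]_n).
Hypotheses (hP1 : orthoproj_mx P1) (hP2 : orthoproj_mx P2).
Hypotheses (al_gt0 : 0 < al) (al_le1 : al <= 1).
Hypotheses (a1_gt0 : 0 < a1) (a1_le2 : a1 <= 2) (a2_gt0 : 0 < a2) (a2_le2 : a2 <= 2).

(* Row vectors: [x *m S_mx] first applies the relaxed projection onto
   [fixmx P1], which plays the role of T_N. *)
Definition S_mx : 'M[R]_n := relax_mx al (relax_mx a1 P1 *m relax_mx a2 P2).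

Lemma S_opE x : S_op al a1 a2 (fixmx P2) (fixmx P1) x = x *m S_mx.
Proof. by rewrite /S_op /rproj !eproj_fixmx // mulmx_relax mulmxA !mulmx_relax. Qed.

Lemma fixmx_S_mx : a1 < 2 \/ a2 < 2 -> fixmx S_mx = fixmx P1 `&` fixmx P2.
Proof.
move=> a12; rewrite fixmx_relax ?lt0r_neq0 // fixmx_mulmx; last 3 first.
- by apply: relax_orthoproj_nonexpansive; rewrite // ltW.
- by apply: relax_orthoproj_nonexpansive; rewrite // ltW.
- case: a12 => [a1_lt2|a2_lt2]; [exists ((2 - a1) / a1); last left|
                                 exists ((2 - a2) / a2); last right].
  + by rewrite divr_gt0 // subr_gt0.
  + by apply: relax_orthoproj_strongly_nonexpansive; rewrite // a1_gt0.
  + by rewrite divr_gt0 // subr_gt0.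
  + by apply: relax_orthoproj_strongly_nonexpansive; rewrite // a2_gt0.
by rewrite !fixmx_relax ?lt0r_neq0.
Qed.

Lemma S_mx_strongly_nonexpansive : al < 1 \/ (a1 < 2 /\ a2 < 2) ->
  exists2 c, 0 < c & strongly_nonexpansive_mx c S_mx.
Proof.
move=> hB; have [al_lt1|al_ge1] := ltP al 1.
  exists ((1 - al) / al); first by rewrite divr_gt0 // subr_gt0.
  apply: relax_nonexpansive; last by rewrite al_gt0.
  by apply: nonexpansive_mulmx; apply: relax_orthoproj_nonexpansive; rewrite // ltW.
have [a1_lt2 a2_lt2] : a1 < 2 /\ a2 < 2 by case: hB => //; rewrite ltNge al_ge1.
have al1 : al = 1 by apply/le_anti; rewrite al_le1 al_ge1.
rewrite /S_mx al1 relax1; set c1 := (2 - a1) / a1; set c2 := (2 - a2) / a2.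
have c1_gt0 : 0 < c1 by rewrite divr_gt0 // subr_gt0.
have c2_gt0 : 0 < c2 by rewrite divr_gt0 // subr_gt0.
exists (Num.min c1 c2 / 4); first by rewrite divr_gt0 // lt_min c1_gt0.
by apply: strongly_nonexpansive_mulmx; rewrite ?ltW //;
  apply: relax_orthoproj_strongly_nonexpansive; rewrite // ?a1_gt0 ?a2_gt0.
Qed.

End RelaxedAlternatingProjections.

Section IterationLimit.
Variables (R : realType) (n : nat) (S P : 'M[R]_n) (c : R).
Hypotheses (SP : S *m P = P) (PS : P *m S = P) (PP : P *m P = P).
Hypotheses (fixS_sub : fixmx S `<=` fixmx P).
Hypotheses (c_gt0 : 0 < c) (S_sne : strongly_nonexpansive_mx c S).

Let Sx (j : nat) (x : 'rV[R]_n) := iter j (mulmxr S) x.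

Lemma unitmx_1_sub_add : 1%:M - S + P \in unitmx.
Proof.
apply: unitmx_inj => u uB0.
have uP0 : u *m P = 0.
  move/(congr1 (mulmx^~ P)): uB0; rewrite mul0mx -mulmxA.
  by rewrite !mulmxDl mulNmx mul1mx SP PP subrr add0r.
move: uB0; rewrite !mulmxDr mulmxN mulmx1 uP0 addr0 => /eqP; rewrite subr_eq0 => /eqP uS.
by rewrite -uP0 [RHS]fixS_sub.
Qed.

(* On [ker P], [1 - S] agrees with the invertible [1 - S + P], hence is bounded
   below; the strong nonexpansiveness of [S] then becomes a contraction. *)
Lemma contraction_on_kerP :
  exists2 q, 0 <= q < 1 & forall w, w *m P = 0 -> enorm2 (w *m S) <= q * enorm2 w.
Proof.
have [K K_gt0 HK] := enorm2_mulmx_le (invmx (1%:M - S + P)).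
exists (Num.max 0 (1 - c / K)).
  by rewrite le_max lexx /= gt_max ltr01 /= ltrBlDr ltrDl divr_gt0.
move=> w wP0.
have w_le : enorm2 w <= K * enorm2 (w - w *m S).
  have -> : w - w *m S = w *m (1%:M - S + P) by rewrite !mulmxDr mulmxN mulmx1 wP0 addr0.
  by have := HK (w *m (1%:M - S + P)); rewrite -mulmxA mulmxV ?unitmx_1_sub_add // mulmx1.
apply: (le_trans (S_sne w)); apply: (@le_trans _ _ ((1 - c / K) * enorm2 w)).
  have : c / K * enorm2 w <= c * enorm2 (w - w *m S).
    by rewrite -mulrA ler_pM2l // ler_pdivrMl.
  nra.
by rewrite ler_wpM2r ?enorm2_ge0 // le_max lexx orbT.
Qed.

Lemma iter_mulmxr_sub_proj j x : Sx j x - x *m P = Sx j (x - x *m P).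
Proof. by elim: j => //= j IH; rewrite -{1}PS mulmxA -mulmxBl -/(Sx j _) IH. Qed.

Lemma iter_mulmxr_cvg x : Sx j x @[j --> \oo] --> x *m P.
Proof.
have [q /andP[q_ge0 q_lt1] q_contr] := contraction_on_kerP.
set w := x - x *m P.
have wP0 : w *m P = 0 by rewrite mulmxBl -mulmxA PP subrr.
have Sw_le j : Sx j w *m P = 0 /\ enorm2 (Sx j w) <= q ^+ j * enorm2 w.
  elim: j => [|j [IH1 IH2]] /=; first by rewrite expr0 mul1r.
  split; first by rewrite /mulmxr -mulmxA SP.
  apply: le_trans (q_contr _ IH1) _; rewrite exprS -mulrA ler_wpM2l //.
apply/cvgrPdist_lt => e e_gt0.
have t_gt0 : 0 < e ^+ 2 / (enorm2 w + 1).
  by rewrite divr_gt0 ?exprn_gt0 // ltr_wpDl ?enorm2_ge0.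
have /cvgrPdist_lt/(_ _ t_gt0) : q ^+ j @[j --> \oo] --> (0 : R).
  by apply: cvg_expr; rewrite ger0_norm.
apply: filterS => j; rewrite sub0r normrN ger0_norm ?exprn_ge0 // => qj_lt.
rewrite -normrN opprB iter_mulmxr_sub_proj -/w; apply: mx_norm_lt => //.
apply: le_lt_trans (Sw_le j).2 _; have := enorm2_ge0 w => w_ge0.
apply: le_lt_trans (ler_wpM2r w_ge0 (ltW qj_lt)) _.
by rewrite mulrAC ltr_pdivrMr ?ltr_wpDl // mulrDr mulr1 ltrDl exprn_gt0.
Qed.

End IterationLimit.

Unset Implicit Arguments.

Theorem proposition3 (R : realType) (n k : nat) (M N : set 'rV[R]_n)
  (xbar : 'rV[R]_n) (TM TN TMN : set 'rV[R]_n) (al a1 a2 : R) :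
  (2 <= k)%N -> M xbar -> N xbar ->
  manifold_tangent k M xbar TM ->
  manifold_tangent k N xbar TN ->
  manifold_tangent k (M `&` N) xbar TMN ->
  TMN = TM `&` TN ->
  0 < al <= 1 -> 0 < a1 <= 2 -> 0 < a2 <= 2 ->
  ((a1 < 2 /\ a2 < 2) \/ (al < 1 /\ (a1 != 2 \/ a2 != 2))) ->
  [/\ TMN = TM `&` TN,
      TM `&` TN = fix_pts (S_op al a1 a2 TM TN) &
      forall x : 'rV[R]_n,
        iter j (S_op al a1 a2 TM TN) x @[j --> \oo] -->
          eproj (fix_pts (S_op al a1 a2 TM TN)) x].
Proof.
move=> k_ge2 _ _ hM hN hMN TMN_eq /andP[al_gt0 al_le1] /andP[a1_gt0 a1_le2]
  /andP[a2_gt0 a2_le2] hB.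
have k_gt0 : (0 < k)%N by apply: leq_trans k_ge2.
have [P2 hP2 ?] := manifold_tangent_orthoproj k_gt0 hM; subst TM.
have [P1 hP1 ?] := manifold_tangent_orthoproj k_gt0 hN; subst TN.
have [P hP TMN_P] := manifold_tangent_orthoproj k_gt0 hMN.
set S := S_mx al a1 a2 P1 P2.
have -> : S_op al a1 a2 (fixmx P2) (fixmx P1) = mulmxr S.
  by apply/funext => x; apply: S_opE.
have fixS : fixmx S = fixmx P2 `&` fixmx P1.
  rewrite setIC fixmx_S_mx //.
  case: hB => [[-> _]|[_ [a1_ne2|a2_ne2]]]; [by left|left|right];
    by rewrite lt_neqAle ?a1_ne2 ?a2_ne2.
have fixP : fixmx P = fixmx S by rewrite -TMN_P TMN_eq fixS.
split=> [//||x]; first by rewrite -fixS.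
rewrite -[fix_pts _]/(fixmx S) -fixP eproj_fixmx //.
have [c c_gt0 S_sne] : exists2 c, 0 < c & strongly_nonexpansive_mx c S.
  by apply: S_mx_strongly_nonexpansive => //; case: hB => [h|[h _]]; [right|left].
apply: (iter_mulmxr_cvg _ _ hP.2 _ c_gt0 S_sne); last by rewrite fixP.
- have P1P : P1 *m P = P by apply: orthoproj_fixmx_sub; rewrite // fixP fixS => ? [].
  have P2P : P2 *m P = P by apply: orthoproj_fixmx_sub; rewrite // fixP fixS => ? [].
  by rewrite /S /S_mx relax_mulmx_fix // -mulmxA !relax_mulmx_fix.
- by apply: mulmx_fixmx_sub hP.2 _; rewrite fixP.
Qed.
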